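(* Let $c=(L,A)$ be a layered architecture configuration. Then semantic dependency is contained in the reflexive-transitive closure of syntactic dependency: for all $l,l'\in L$, if $l\rightsquigarrow_c l'$ then $l\to_c^* l'$.
   Context: Fix a set $\mathtt{SERVICE}$ of services and a set $\mathtt{PORT}$ of ports with $\mathit{type}\colon\mathtt{PORT}\to\mathcal{P}(\mathtt{SERVICE})$ and a partition $\mathtt{PORT}=\mathcal{I}\cup\mathcal{O}$ (disjoint) into input and output ports. For $P\subseteq\mathtt{PORT}$, $\overline{P}=\prod_{p\in P}\mathit{type}(p)$ (valuations of $P$); for a function $g$ and a set $Z$, $g|_Z$ is the restriction of $g$ to $\mathrm{dom}(g)\cap Z$. A layer is $l=(I_l,O_l,f_l)$ with $I_l\subseteq\mathcal{I}$, $O_l\subseteq\mathcal{O}$, $f_l\colon\overline{I_l}\to\mathcal{P}(\overline{O_l})$. A layered architecture configuration is $c=(L,A)$ with $L$ a set of layers and $A$ a partial map from $\bigcup_{l\in L}I_l$ to $\bigcup_{l\in L}O_l$ such that distinct layers share no ports and $\mathit{type}(A(i))\subseteq\mathit{type}(i)$ whenever $A(i)$ is defined. Let $\mathrm{Ports}(c)$, $\mathrm{In}(c)=\bigcup_l I_l$, $\mathrm{Out}(c)=\bigcup_l O_l$ be the sets of all, input, output ports of $c$, and $\mathrm{OpenIn}(c)=\mathrm{In}(c)\setminus\mathrm{dom}(A)$ the open input ports. $\pi_c(p)$ is the unique layer of $L$ owning port $p$. The attachment-closure $O_l^*$ of $l\in L$ is the smallest $P\subseteq\mathrm{Ports}(c)$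 with $O_l\subseteq P$, closed under ($i\in P$, $A(i)=o$ $\Rightarrow$ $o\in P$) and ($o\in\mathrm{Out}(c)\cap P\Rightarrow I_{\pi_c(o)}\subseteq P$). The configuration semantics of $l\in L$ is the map $[\![c]\!]_l\colon\overline{\mathrm{OpenIn}(c)}\to\mathcal{P}(\overline{O_l})$ with $[\![c]\!]_l(\mu)$ the set of all $\nu|_{O_l}$ where $\nu\in\overline{O_l^*}$ satisfies: (a) $\mu|_{O_l^*}=\nu|_{\mathrm{OpenIn}(c)}$; (b) $\nu(i)=\nu(A(i))$ for every input port $i\in O_l^*$ with $A(i)$ defined; (c) for every $o\in\mathrm{Out}(c)\cap O_l^*$, with $r=\pi_c(o)$, there is $\xi\in f_r(\nu|_{I_r})$ with $\xi|_{O_l^*}=\nu|_{O_r}$. For $f\colon\overline{I_l}\to\mathcal{P}(\overline{O_l})$ let $l[f]=(I_l,O_l,f)$ and $c[l:=f]=((L\setminus\{l\})\cup\{l[f]\},A)$. Syntactic dependency: $l\to_c l'$ iff there are $o\in O_l$, $i\in I_{l'}$ with $A(i)=o$; $\to_c^*$ is its reflexive-transitive closure. Semantic dependency $\rightsquigarrow_c\subseteq L\times L$: $l\rightsquigarrow_c l$ iff there is $f\colon\overline{I_l}\to\mathcal{P}(\overline{O_l})$ with $[\![c]\!]_l\neq[\![c[l:=f]]\!]_{l[f]}$; for $l\neq l'$, $l\rightsquigarrow_c l'$ iff there is $f\colon\overline{I_l}\to\mathcal{P}(\overline{O_l})$ with $[\![c]\!]_{l'}\neq[\![c[l:=f]]\!]_{l'}$.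 *)

From Stdlib Require Import ClassicalDescription Relations.

Set Implicit Arguments.

Section Arch.

(* S = SERVICE, P = PORT, typ p = type(p) as a predicate on services,
   isIn p <-> p is an input port (otherwise an output port). *)
Context {S P : Type} (typ : P -> S -> Prop) (isIn : P -> Prop).

Definition valuation := P -> option S.

(* v is an element of \overline{Q}: dom v = Q and v p \in type(p). *)
Definition is_val (Q : P -> Prop) (v : valuation) : Prop :=
  forall p, (Q p <-> v p <> None) /\ (forall s, v p = Some s -> typ p s).

(* g|_Z = h|_W, written out pointwise (g|_Z p = g p if p \in Z, else undefined). *)
Definition restr_eq (g : valuation) (Z : P -> Prop) (h : valuation) (W : P -> Prop) : Prop :=
  forall p, (Z p -> W p -> g p = h p) /\ (Z p -> ~ W p -> g p = None)
            /\ (~ Z p -> W p -> h p = None).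

(* f : \overline{Ii} -> P(\overline{Oo}), represented by its graph. *)
Definition layer_fun (Ii Oo : P -> Prop) (f : valuation -> valuation -> Prop) : Prop :=
  forall x y, f x y -> is_val Ii x /\ is_val Oo y.

(* A configuration: a family of layers indexed by LI (layer l = (I l, O l, F l))
   and the partial attachment map A. *)
Record config (LI : Type) := Config {
  I : LI -> P -> Prop;
  O : LI -> P -> Prop;
  F : LI -> valuation -> valuation -> Prop;
  A : P -> option P }.

Context {LI : Type}.

Definition owns (C : config LI) (l : LI) (p : P) : Prop := I C l p \/ O C l p.

Definition wf_config (C : config LI) : Prop :=
  (forall l p, I C l p -> isIn p) /\
  (forall l p, O C l p -> ~ isIn p) /\
  (forall l, layer_fun (I C l) (O C l) (F C l)) /\
  (forall l l' p, l <> l' -> owns C l p -> owns C l' p -> False) /\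
  (forall i o, A C i = Some o ->
     (exists l, I C l i) /\ (exists l, O C l o) /\ (forall s, typ o s -> typ i s)).

Definition InC (C : config LI) (p : P) : Prop := exists l, I C l p.
Definition OpenIn (C : config LI) (p : P) : Prop := InC C p /\ A C p = None.

Inductive star (C : config LI) (l : LI) : P -> Prop :=
  | star_out p : O C l p -> star C l p
  | star_att i o : star C l i -> A C i = Some o -> star C l o
  | star_in o r p : star C l o -> O C r o -> I C r p -> star C l p.

(* [[C]]_l (mu) contains w *)
Definition sem (C : config LI) (l : LI) (mu w : valuation) : Prop :=
  exists nu : valuation,
    is_val (star C l) nu /\
    restr_eq mu (star C l) nu (OpenIn C) /\
    (forall i o, star C l i -> isIn i -> A C i = Some o -> nu i = nu o) /\
    (forall o, star C l o -> forall r, O C r o ->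
       exists x xi, restr_eq x (fun _ => True) nu (I C r) /\ F C r x xi /\
                    restr_eq xi (star C l) nu (O C r)) /\
    restr_eq w (fun _ => True) nu (O C l).

Definition sem_neq (C C' : config LI) (k : LI) : Prop :=
  exists mu, is_val (OpenIn C) mu /\ ~ (forall w, sem C k mu w <-> sem C' k mu w).

Definition upd (C : config LI) (l : LI) (f : valuation -> valuation -> Prop) : config LI :=
  {| I := I C; O := O C;
     F := fun k => if excluded_middle_informative (k = l) then f else F C k;
     A := A C |}.

Definition syn_dep (C : config LI) (l l' : LI) : Prop :=
  exists o i, O C l o /\ I C l' i /\ A C i = Some o.

(* semantic dependency l ~>_c l' (both cases l = l' and l <> l'; in the
   indexed representation layer l[f] of c[l:=f] has index l). *)
Definition sem_dep (C : config LI) (l l' : LI) : Prop :=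
  if excluded_middle_informative (l = l') then
    exists f, layer_fun (I C l) (O C l) f /\ sem_neq C (upd C l f) l
  else
    exists f, layer_fun (I C l) (O C l) f /\ sem_neq C (upd C l f) l'.

End Arch.

(* If l' does not syntactically depend on l, then no layer owning an output
   port of the attachment closure of l' is l: every owner of a port in that
   closure reaches l' along syntactic dependencies.  The semantics of l' only
   consults the functions of those layers, so replacing the function of l
   leaves it unchanged. *)
From Stdlib Require Import ClassicalDescription Relations Classical
  FunctionalExtensionality PropExtensionality.

Section Dependency.

Context {S P : Type} (typ : P -> S -> Prop) (isIn : P -> Prop) {LI : Type}.

Lemma star_wiring (C C' : @config S P LI) :
  I C = I C' -> O C = O C' -> A C = A C' ->
  forall k p, star C k p -> star C' k p.
Proof.
  intros HI HO HA k p Hs.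
  induction Hs as [p Hp | i o _ IH Hio | o r p _ IH Hor Hrp].
  - apply star_out; rewrite <- HO; exact Hp.
  - apply (star_att IH); rewrite <- HA; exact Hio.
  - rewrite HO in Hor; rewrite HI in Hrp; exact (star_in r p IH Hor Hrp).
Qed.

Lemma star_wiring_eq {C C' : @config S P LI} :
  I C = I C' -> O C = O C' -> A C = A C' -> forall k, star C' k = star C k.
Proof.
  intros HI HO HA k; extensionality p; apply propositional_extensionality.
  split; apply star_wiring; auto.
Qed.

Lemma sem_local_impl (C C' : @config S P LI) (k : LI) :
  I C = I C' -> O C = O C' -> A C = A C' ->
  (forall o r, star C k o -> O C r o -> F C r = F C' r) ->
  forall mu w, sem typ isIn C k mu w -> sem typ isIn C' k mu w.
Proof.
  intros HI HO HA HF mu w.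
  unfold sem, OpenIn, InC.
  rewrite (star_wiring_eq HI HO HA), <- HI, <- HO, <- HA.
  intros [nu [Hval [Hmu [Hatt [Hfun Hw]]]]].
  exists nu; do 3 (split; [assumption |]); split; [| assumption].
  intros o Ho r Hor; rewrite <- (HF o r Ho Hor); exact (Hfun o Ho r Hor).
Qed.

Lemma sem_local (C C' : @config S P LI) (k : LI) :
  I C = I C' -> O C = O C' -> A C = A C' ->
  (forall o r, star C k o -> O C r o -> F C r = F C' r) ->
  forall mu w, sem typ isIn C k mu w <-> sem typ isIn C' k mu w.
Proof.
  intros HI HO HA HF mu w; split; apply sem_local_impl; auto.
  intros o r Ho Hor; symmetry; apply (HF o r).
  - rewrite <- (star_wiring_eq HI HO HA); exact Ho.
  - rewrite HO; exact Hor.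
Qed.

Lemma owns_unique {C : @config S P LI} {k k' : LI} {p : P} :
  wf_config typ isIn C -> owns C k p -> owns C k' p -> k = k'.
Proof.
  intros [_ [_ [_ [Hdisj _]]]] Hk Hk'.
  apply NNPP; intro Hne; exact (Hdisj k k' p Hne Hk Hk').
Qed.

Lemma star_owner_syn_dep {C : @config S P LI} {l' : LI} {p : P} :
  wf_config typ isIn C -> star C l' p ->
  forall k, owns C k p -> clos_refl_trans LI (syn_dep C) k l'.
Proof.
  intros Hwf Hs.
  induction Hs as [p Hp | i o _ IH Hio | o r p _ IH Hor Hrp]; intros k Hk.
  - rewrite (owns_unique Hwf Hk (or_intror Hp)); apply rt_refl.
  - pose proof Hwf as (_ & _ & _ & _ & Hatt).
    destruct (Hatt i o Hio) as [[li Hli] [[lo Hlo] _]].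
    rewrite (owns_unique Hwf Hk (or_intror Hlo)).
    apply rt_trans with li.
    + apply rt_step; exists o, i; auto.
    + apply IH; left; exact Hli.
  - rewrite (owns_unique Hwf Hk (or_introl Hrp)).
    apply IH; right; exact Hor.
Qed.

End Dependency.

Theorem mainTheorem4 (SERVICE PORT : Type) (type : PORT -> SERVICE -> Prop)
  (isIn : PORT -> Prop) (LI : Type) (c : @config SERVICE PORT LI) :
  wf_config type isIn c ->
  forall l l' : LI, sem_dep type isIn c l l' -> clos_refl_trans LI (syn_dep c) l l'.
Proof.
  intros Hwf l l' Hdep.
  unfold sem_dep in Hdep.
  destruct (excluded_middle_informative (l = l')) as [<- | _]; [apply rt_refl |].
  apply NNPP; intro Hnot.
  destruct Hdep as [f [_ [mu [_ Hneq]]]].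
  apply Hneq; apply sem_local; auto.
  intros o r Ho Hor; simpl.
  destruct (excluded_middle_informative (r = l)) as [-> | _]; [| reflexivity].
  exfalso; apply Hnot; exact (star_owner_syn_dep type isIn Hwf Ho l (or_intror Hor)).
Qed.
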